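(* Let $P$ be a uniform-length histogram polygon with contact tree $T$. Then the base rectangle of $P$ is orientation-fixed with every rectangle on the left spine and on the right spine of $T$.
   Context: Two points $p,q$ of a polygon $P$ see each other if the segment $pq$ does not intersect the exterior of $P$ (visibility along edges and through vertices allowed). A uniform-length histogram polygon is an orthogonal simple polygon with a distinguished horizontal base edge such that $P$ lies above the base edge and is monotone with respect to it, all other boundary edges have the same length, and no three consecutive boundary vertices are collinear; its boundary apart from the base edge is a chain of alternating up- and down-staircases. Every vertical boundary edge on an up-staircase has a companion vertical boundary edge on a down-staircase spanning the same heights such that their four endpoints are the corners of an axis-aligned rectangle inside $P$; these rectangles decompose $P$. The two upper corners of a rectangle are its top vertices and the two lower corners its bottom vertices. The contact tree $T$ has one node per rectangle, two nodes adjacent iff the rectangles touch along a segment of positive length, rooted at the base rectangle (the one containing the base edge); leaves correspond to the rectangles containing tabs (top horizontal boundary edges with two convex endpoints), ordered left to right by position. The left (right) spine of $T$ is the path from the root to the leftmost (rightmost) leaf. Two distinct rectangles $R_1,R_2$ are orientation-fixed if a bottom vertex of one of them sees a top vertex of the other. *)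

From HB Require Import structures.
From mathcomp Require Import all_boot all_order all_algebra.
From mathcomp Require Import reals.
Set Implicit Arguments. Unset Strict Implicit. Unset Printing Implicit Defensive.
Import Order.TTheory GRing.Theory Num.Theory.

(* A uniform-length histogram polygon (up to a rigid motion) is encoded by the
   sequence hs of its column heights: base edge [0, a*n] x {0}, column m is
   [a*m, a*(m+1)] x [0, a*hs_m], with common edge length a > 0. *)

Definition hgt (hs : seq nat) (m : nat) : nat := nth 0 hs m.
Definition hleft (hs : seq nat) (m : nat) : nat :=
  if m is m'.+1 then hgt hs m' else 0.

(* all non-base edges have length a (one unit), no three consecutive collinear
   vertices, histogram over the base: heights >= 1, start and end at 1,
   consecutive heights differ by exactly 1. *)
Definition ulhist (hs : seq nat) : bool :=
  [&& 0 < size hs, all (fun h => 0 < h) hs, hgt hs 0 == 1,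
      hgt hs (size hs).-1 == 1 &
      all (fun m => (hgt hs m.+1 == (hgt hs m).+1) || (hgt hs m == (hgt hs m.+1).+1))
          (iota 0 (size hs).-1)].

(* rectangles: (left abscissa, right abscissa, level k), spanning heights [k,k+1] *)
Definition rect := (nat * nat * nat)%type.
Definition rL (r : rect) : nat := r.1.1.
Definition rR (r : rect) : nat := r.1.2.
Definition rlev (r : rect) : nat := r.2.

(* vertical boundary edge from (i,k) to (i,k+1) on an up-staircase *)
Definition up_edge (hs : seq nat) i k := (hleft hs i == k) && (hgt hs i == k.+1).
(* vertical boundary edge from (j,k) to (j,k+1) on a down-staircase *)
Definition down_edge (hs : seq nat) j k := (hgt hs j == k) && (hleft hs j == k.+1).

(* [i,j] x [k,k+1] is a rectangle of the decomposition: its vertical sides are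
   companion up/down boundary edges and it lies inside P *)
Definition is_rect (hs : seq nat) (r : rect) : bool :=
  [&& rL r < rR r, up_edge hs (rL r) (rlev r), down_edge hs (rR r) (rlev r) &
      all (fun m => rlev r < hgt hs m) (index_iota (rL r) (rR r))].

Definition base_rect (hs : seq nat) (r : rect) : bool :=
  [&& rL r == 0, rR r == size hs & rlev r == 0].

(* touching along a segment of positive length *)
Definition touch (r1 r2 : rect) : bool :=
  ((((rlev r1).+1 == rlev r2) || ((rlev r2).+1 == rlev r1))
     && (maxn (rL r1) (rL r2) < minn (rR r1) (rR r2)))
  || ((rlev r1 == rlev r2) && ((rR r1 == rL r2) || (rR r2 == rL r1))).

(* tab: top horizontal edge of column m with two convex endpoints *)
Definition is_tab (hs : seq nat) m : bool :=
  [&& m < size hs, hleft hs m < hgt hs m & hgt hs m.+1 < hgt hs m].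

Definition contains_tab (hs : seq nat) (r : rect) m : bool :=
  [&& is_tab hs m, rL r <= m < rR r & hgt hs m == (rlev r).+1].

Definition leftmost_tab (hs : seq nat) m : bool :=
  is_tab hs m && all (fun m' => ~~ is_tab hs m') (iota 0 m).
Definition rightmost_tab (hs : seq nat) m : bool :=
  is_tab hs m && all (fun m' => ~~ is_tab hs m') (iota m.+1 (size hs - m.+1)).

(* r lies on the (simple) path in the contact tree from root r0 to the leaf
   rectangle containing a tab m satisfying `which` *)
Definition on_spine (which : seq nat -> nat -> bool) (hs : seq nat) (r0 r : rect) : Prop :=
  exists (m : nat) (L : rect) (s : seq rect),
    [/\ which hs m, is_rect hs L & contains_tab hs L m] /\
    [/\ all (is_rect hs) s, path touch r0 s, last r0 s = L,
        uniq (r0 :: s) & r \in r0 :: s].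

Definition on_left_spine := on_spine leftmost_tab.
Definition on_right_spine := on_spine rightmost_tab.

Local Open Scope ring_scope.

Definition region (R : realType) (a : R) (hs : seq nat) (p : R * R) : Prop :=
  exists2 m : nat, (m < size hs)%N &
    (a * m%:R <= p.1 <= a * m.+1%:R) /\ (0 <= p.2 <= a * (hgt hs m)%:R).

Definition sees (R : realType) (a : R) (hs : seq nat) (p q : R * R) : Prop :=
  forall t : R, 0 <= t <= 1 ->
    region a hs ((1 - t) * p.1 + t * q.1, (1 - t) * p.2 + t * q.2).

Definition pt (R : realType) (a : R) (x y : nat) : R * R := (a * x%:R, a * y%:R).

Definition bottom_vertices (R : realType) (a : R) (r : rect) : seq (R * R) :=
  [:: pt a (rL r) (rlev r); pt a (rR r) (rlev r)].
Definition top_vertices (R : realType) (a : R) (r : rect) : seq (R * R) :=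
  [:: pt a (rL r) (rlev r).+1; pt a (rR r) (rlev r).+1].

Definition orientation_fixed (R : realType) (a : R) (hs : seq nat) (r1 r2 : rect) : Prop :=
  (exists b t, [/\ b \in bottom_vertices a r1, t \in top_vertices a r2 & sees a hs b t])
  \/ (exists b t, [/\ b \in bottom_vertices a r2, t \in top_vertices a r1 & sees a hs b t]).

From HB Require Import structures.
From mathcomp Require Import all_boot all_order all_algebra.
From mathcomp Require Import reals.
From mathcomp Require Import ring lra zify.
Import Order.TTheory GRing.Theory Num.Theory.
Set Implicit Arguments. Unset Strict Implicit. Unset Printing Implicit Defensive.

(* A touch path leaving the base rectangle can only climb: the one rectangle
   directly below a rectangle [y] of the path that shares a column with [y] is
   its predecessor.  So the column ranges along the path are nested, and every
   rectangle [r] on a spine covers the tab column [m] of the spine's leaf.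
   Left of the leftmost tab the columns form the staircase [hgt c = c + 1];
   hence [r] starts at abscissa [rlev r], and the segment from the origin to
   the top right corner of [r] has slope at most one, so it runs below the
   staircase and then inside [r].  The right spine is the mirror image, with
   the staircase [hgt c = size hs - c] right of the rightmost tab. *)

Lemma hgt_default hs c : (size hs <= c)%N -> hgt hs c = 0%N.
Proof. exact: nth_default. Qed.

Lemma ltn_size_hgt hs c : (0 < hgt hs c)%N -> (c < size hs)%N.
Proof. by apply: contraTT; rewrite -leqNgt => /hgt_default ->. Qed.

Lemma hleftE hs i : (0 < i)%N -> hleft hs i = hgt hs i.-1.
Proof. by case: i. Qed.

Section Staircases.
Variable hs : seq nat.
Hypothesis hs_ul : ulhist hs.

Lemma ulhist_step c : (c.+1 < size hs)%N ->
  hgt hs c.+1 = (hgt hs c).+1 \/ hgt hs c = (hgt hs c.+1).+1.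
Proof.
case/and5P: hs_ul => _ _ _ _ /allP steps c_lt.
by have /orP[/eqP|/eqP] := steps c (ltac:(rewrite mem_iota; lia)); [left | right].
Qed.

Lemma is_tab_lt_size m : is_tab hs m -> (m < size hs)%N.
Proof. by case/and3P. Qed.

Lemma leftmost_tab_hgt m c : leftmost_tab hs m -> (c <= m)%N ->
  hleft hs c = c /\ hgt hs c = c.+1.
Proof.
case/andP=> /is_tab_lt_size m_lt /allP no_tab.
case/and5P: hs_ul => _ _ /eqP hgt0 _ _.
elim: c => [_|c IH c_m]; first by split.
have [left_c hgt_c] := IH (ltnW c_m).
split=> //; have c_lt : (c.+1 < size hs)%N by lia.
have [->|hgt_c1] := ulhist_step c_lt; first by rewrite hgt_c.
rewrite hgt_c in hgt_c1.
have /negP[] := no_tab c (ltac:(rewrite mem_iota; lia)).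
by apply/and3P; split; lia.
Qed.

Lemma rightmost_tab_hgt m c : rightmost_tab hs m -> (m <= c)%N ->
  hgt hs c = (size hs - c)%N.
Proof.
case/andP=> /is_tab_lt_size m_lt /allP no_tab m_c.
case/and5P: hs_ul => _ _ _ /eqP hgt_last _.
have [n_c|c_n] := leqP (size hs) c; first by rewrite hgt_default //; lia.
suff staircase d : (m + d < size hs)%N ->
    hgt hs (size hs - d.+1) = d.+1 /\ hgt hs (size hs - d) = d.
  have [] := staircase (size hs - c.+1)%N (ltac:(lia)).
  have -> : (size hs - (size hs - c.+1).+1 = c)%N by lia.
  by move=> -> _; lia.
elim: d => [|d IH] d_lt; first by rewrite subn1 hgt_last subn0 hgt_default.
have /IH[hgt_d hgt_d1] : (m + d < size hs)%N by lia.
split=> //; set c' := (size hs - d.+2)%N.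
have c'S : c'.+1 = (size hs - d.+1)%N by rewrite /c'; lia.
have c'_lt : (c'.+1 < size hs)%N by lia.
have [up|->] := ulhist_step c'_lt; last by rewrite c'S hgt_d.
rewrite c'S in up.
have /negP[] := no_tab (size hs - d.+1)%N (ltac:(rewrite mem_iota; lia)).
rewrite /is_tab hleftE; last by lia.
have -> : (size hs - d.+1).-1 = c' by lia.
have -> : (size hs - d.+1).+1 = (size hs - d)%N by lia.
by apply/and3P; split; lia.
Qed.

End Staircases.

Definition cols (r : rect) (c : nat) : bool := (rL r <= c < rR r)%N.
Definition subcols (q p : rect) : bool := (rL p <= rL q) && (rR q <= rR p).

Lemma subcols_trans : transitive subcols.
Proof. by move=> q p r /andP[? ?] /andP[? ?]; apply/andP; split; lia. Qed.

Section Rectangles.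
Variable hs : seq nat.

Lemma rect_hgt r c : is_rect hs r -> cols r c -> (rlev r < hgt hs c)%N.
Proof. by case/and4P=> _ _ _ /allP r_in c_r; apply: r_in; rewrite mem_index_iota. Qed.

Lemma rect_sides r : is_rect hs r ->
  [/\ (rL r < rR r)%N, hleft hs (rL r) = rlev r, hgt hs (rR r) = rlev r
    & hleft hs (rR r) = (rlev r).+1].
Proof. by case/and4P=> ? /andP[/eqP ? _] /andP[/eqP ? /eqP ?]. Qed.

Lemma rect_subcols p q c : is_rect hs p -> is_rect hs q -> (rlev p <= rlev q)%N ->
  cols p c -> cols q c -> subcols q p.
Proof.
move=> p_rect q_rect le_pq /andP[pL pR] /andP[qL qR].
have [_ left_p right_p _] := rect_sides p_rect.
apply/andP; split; rewrite leqNgt; apply/negP => out.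
- by have := rect_hgt (c := (rL p).-1) q_rect; rewrite /cols -hleftE ?left_p; lia.
- by have := rect_hgt (c := rR p) q_rect; rewrite right_p /cols; lia.
Qed.

Lemma rect_eq p q c : is_rect hs p -> is_rect hs q -> rlev p = rlev q ->
  cols p c -> cols q c -> p = q.
Proof.
move=> p_rect q_rect lev_pq p_c q_c.
have := rect_subcols p_rect q_rect (eq_leq lev_pq) p_c q_c.
have := rect_subcols q_rect p_rect (eq_leq (esym lev_pq)) q_c p_c.
case: p q lev_pq {p_rect q_rect p_c q_c} => [[? ?] ?] [[? ?] ?].
by rewrite /subcols /rL /rR /rlev /= => -> /andP[? ?] /andP[? ?]; congr (_, _, _); lia.
Qed.

Lemma touch_rect p q : is_rect hs p -> is_rect hs q -> touch p q ->
  ((rlev p).+1 = rlev q \/ (rlev q).+1 = rlev p) /\ exists c, cols p c && cols q c.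
Proof.
move=> p_rect q_rect.
have [? _ right_p _] := rect_sides p_rect; have [? _ right_q _] := rect_sides q_rect.
case/orP=> [/andP[adj overlap]|/andP[/eqP lev_pq /orP[/eqP|/eqP] side]].
- split; first by case/orP: adj => /eqP; [left | right].
  by exists (maxn (rL p) (rL q)); rewrite /cols; lia.
- by have := rect_hgt (c := rL q) q_rect; rewrite /cols -side right_p; lia.
- by have := rect_hgt (c := rL p) p_rect; rewrite /cols -side right_q; lia.
Qed.

Lemma subcols_cols q p c : subcols q p -> cols q c -> cols p c.
Proof. by rewrite /subcols /cols; lia. Qed.

Lemma touch_path_subcols x s : all (is_rect hs) (x :: s) -> path touch x s ->
  uniq (x :: s) -> (forall z, z \in s -> touch x z -> (rlev x <= rlev z)%N) ->
  {in x :: s, forall y, subcols (last x s) y}.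
Proof.
elim: s x => [|y s IH] x.
  by move=> _ _ _ _ y; rewrite inE => /eqP ->; rewrite /subcols !leqnn.
rewrite /= => /and3P[x_rect y_rect s_rect] /andP[xy ys] /andP[x_notin ys_uniq] x_low.
have [[x_y|y_x] [c /andP[x_c y_c]]] := touch_rect x_rect y_rect xy; last first.
  by have := x_low y (mem_head _ _) xy; lia.
have y_x : subcols y x by apply: rect_subcols x_rect y_rect _ x_c y_c; lia.
have y_chain : {in y :: s, forall w, subcols (last y s) w}.
  apply: IH => //; first by rewrite /= y_rect.
  move=> z z_s yz; have z_rect : is_rect hs z := allP s_rect z z_s.
  have [[up|z_y] [c' /andP[y_c' z_c']]] := touch_rect y_rect z_rect yz.
    by rewrite -up.
  have y_z : subcols y z by apply: rect_subcols z_rect y_rect _ z_c' y_c'; lia.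
  have y_cL : cols y (rL y) by have [] := rect_sides y_rect; rewrite /cols leqnn.
  (* [z] lies below [y] on the level of [x] and shares a column with both. *)
  have lev_zx : rlev z = rlev x by apply: succn_inj; rewrite z_y x_y.
  have z_x := rect_eq z_rect x_rect lev_zx (subcols_cols y_z y_cL) (subcols_cols y_x y_cL).
  by move: x_notin; rewrite -z_x inE z_s orbT.
move=> w; rewrite inE => /predU1P[->|]; last exact: y_chain.
exact: subcols_trans (y_chain y (mem_head _ _)) y_x.
Qed.

End Rectangles.

Lemma on_spine_cols which hs r0 r : is_rect hs r0 -> rlev r0 = 0 ->
  on_spine which hs r0 r -> is_rect hs r /\ exists2 m, which hs m & cols r m.
Proof.
move=> r0_rect r0_lev [m [L [s [[which_m _ /and3P[_ L_m _]] [s_rect r0_s last_s s_uniq r_s]]]]].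
have path_rect : all (is_rect hs) (r0 :: s) by rewrite /= r0_rect.
split; first exact: allP path_rect r r_s.
exists m => //; apply: subcols_cols L_m; rewrite -last_s.
by apply: touch_path_subcols path_rect r0_s s_uniq _ r r_s => z _ _; rewrite r0_lev.
Qed.

Section Visibility.
Local Open Scope ring_scope.
Variables (R : realType) (a : R).
Hypothesis a_gt0 : 0 < a.

Lemma nat_cell (lo hi : nat) (x : R) : (lo < hi)%N -> lo%:R <= x <= hi%:R ->
  exists c : nat, [/\ (lo <= c < hi)%N, c%:R <= x & x <= c.+1%:R].
Proof.
elim: hi => [|hi IH] // lo_hi /andP[lo_x x_hi].
have [x_le|le_x] := lerP x hi%:R; last first.
  by exists hi; rewrite ltnSn -ltnS lo_hi (ltW le_x).
have [hi_lo|lo_hi'] := leqP hi lo.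
  by exists hi; rewrite ltnSn -ltnS lo_hi x_hi (le_trans _ lo_x) ?ler_nat.
have [c [/andP[lo_c c_hi] c_x x_c]] := IH lo_hi' (introT andP (conj lo_x x_le)).
by exists c; rewrite lo_c c_x x_c ltnS ltnW.
Qed.

Lemma region_scale hs c (x y : R) : (c < size hs)%N ->
  c%:R <= x <= c.+1%:R -> 0 <= y <= (hgt hs c)%:R -> region a hs (a * x, a * y).
Proof.
move=> c_lt x_c /andP[y_ge0 y_le]; exists c => //=.
by rewrite !ler_pM2l // pmulr_rge0 // y_ge0 y_le.
Qed.

Lemma sees_origin hs j k : (k < j)%N ->
  (forall c, (c < j)%N -> (minn c.+1 k.+1 <= hgt hs c)%N) ->
  sees a hs (pt a 0 0) (pt a j k.+1).
Proof.
move=> k_j hgt_ge t /andP[t_ge0 t_le1].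
have kj : k.+1%:R <= j%:R :> R by rewrite ler_nat.
have [c [/andP[_ c_j] c_x x_c]] : exists c : nat,
    [/\ (0 <= c < j)%N, c%:R <= t * j%:R & t * j%:R <= c.+1%:R].
  by apply: nat_cell; [lia | rewrite mulr_ge0 ?ler0n //= ler_piMl ?ler0n].
have -> : ((1 - t) * (pt a 0 0).1 + t * (pt a j k.+1).1,
           (1 - t) * (pt a 0 0).2 + t * (pt a j k.+1).2)
        = (a * (t * j%:R), a * (t * k.+1%:R)) by rewrite /pt /=; congr pair; ring.
apply: (region_scale (c := c)); first by apply: ltn_size_hgt; have := hgt_ge c c_j; lia.
  by rewrite c_x x_c.
(* slope at most one: [t * k.+1] is below both [t * j <= c.+1] and [k.+1] *)
rewrite mulr_ge0 ?ler0n //=; apply: le_trans (_ : _ <= (minn c.+1 k.+1)%:R) _.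
  by case: leqP => _; [rewrite (le_trans _ x_c) ?ler_wpM2l | rewrite ler_piMl ?ler0n].
by rewrite ler_nat hgt_ge.
Qed.

Definition mirror (n : nat) (p : R * R) : R * R := (a * n%:R - p.1, p.2).

Lemma region_rev hs p : region a (rev hs) p -> region a hs (mirror (size hs) p).
Proof.
case=> m; rewrite size_rev => m_lt [/andP[m_x x_m] /andP[y_ge0 y_le]].
exists (size hs - m.+1)%N; first by lia.
have -> : hgt hs (size hs - m.+1) = hgt (rev hs) m by rewrite /hgt nth_rev ?size_rev.
split; last by rewrite y_ge0 y_le.
have -> : (size hs - m.+1).+1 = (size hs - m)%N by lia.
rewrite /= !natrB ?(ltnW m_lt) // !mulrBr; lra.
Qed.

Lemma sees_rev hs p q :
  sees a (rev hs) p q -> sees a hs (mirror (size hs) p) (mirror (size hs) q).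
Proof.
move=> pq t t01; have := region_rev (pq t t01).
by congr region; rewrite /mirror /=; congr pair; ring.
Qed.

Lemma sees_end hs i k : (i + k.+1 <= size hs)%N ->
  (forall c, (i <= c < size hs)%N -> (minn (size hs - c) k.+1 <= hgt hs c)%N) ->
  sees a hs (pt a (size hs) 0) (pt a i k.+1).
Proof.
move=> ik_n hgt_ge.
have k_lt : (k < size hs - i)%N by lia.
have rev_hgt c : (c < size hs - i)%N -> (minn c.+1 k.+1 <= hgt (rev hs) c)%N.
  move=> c_lt; rewrite /hgt nth_rev; last by lia.
  by have := hgt_ge (size hs - c.+1)%N; rewrite subKn; [apply; lia | lia].
have -> : pt a (size hs) 0 = mirror (size hs) (pt a 0 0).
  by rewrite /mirror /pt /= mulr0 subr0.
have -> : pt a i k.+1 = mirror (size hs) (pt a (size hs - i) k.+1).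
  by rewrite /mirror /pt /= natrB; [congr pair; ring | lia].
exact: sees_rev (sees_origin k_lt rev_hgt).
Qed.

Lemma sees_origin_leftmost hs m r : ulhist hs -> leftmost_tab hs m ->
  is_rect hs r -> cols r m -> sees a hs (pt a 0 0) (pt a (rR r) (rlev r).+1).
Proof.
move=> hs_ul tab_m r_rect /andP[rL_m m_rR].
have [lt_LR left_r _ _] := rect_sides r_rect.
have [left_rL _] := leftmost_tab_hgt hs_ul tab_m rL_m.
apply: sees_origin => [|c c_rR]; first by move: left_r; rewrite left_rL; lia.
have [c_rL|rL_c] := ltnP c (rL r).
  by have [_ ->] := leftmost_tab_hgt hs_ul tab_m (ltnW (leq_trans c_rL rL_m)); rewrite geq_minl.
by apply: leq_trans (geq_minr _ _) (rect_hgt r_rect _); rewrite /cols rL_c.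
Qed.

Lemma sees_end_rightmost hs m r : ulhist hs -> rightmost_tab hs m ->
  is_rect hs r -> cols r m -> sees a hs (pt a (size hs) 0) (pt a (rL r) (rlev r).+1).
Proof.
move=> hs_ul tab_m r_rect /andP[rL_m m_rR].
have [lt_LR _ _ right_r] := rect_sides r_rect.
have stair := rightmost_tab_hgt hs_ul tab_m.
have rR_lev : (rR r + rlev r = size hs)%N.
  by move: right_r; rewrite hleftE ?stair; lia.
apply: sees_end => [|c /andP[rL_c c_n]]; first by lia.
have [c_rR|rR_c] := ltnP c (rR r); last by rewrite stair ?geq_minl; lia.
by apply: leq_trans (geq_minr _ _) (rect_hgt r_rect _); rewrite /cols rL_c.
Qed.

End Visibility.

Theorem lemma14 (R : realType) (a : R) (hs : seq nat) (r0 r : rect) :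
  (0 < a)%R -> ulhist hs -> is_rect hs r0 -> base_rect hs r0 ->
  (on_left_spine hs r0 r \/ on_right_spine hs r0 r) -> r <> r0 ->
  orientation_fixed a hs r0 r.
Proof.
move=> a_gt0 hs_ul r0_rect /and3P[/eqP r0_L /eqP r0_R /eqP r0_lev] on_spine_r _.
left; case: on_spine_r => /(on_spine_cols r0_rect r0_lev) [r_rect [m tab_m r_m]].
- exists (pt a 0 0), (pt a (rR r) (rlev r).+1); split.
  + by rewrite /bottom_vertices r0_L r0_lev mem_head.
  + by rewrite /top_vertices !inE eqxx orbT.
  + exact: sees_origin_leftmost hs_ul tab_m r_rect r_m.
- exists (pt a (size hs) 0), (pt a (rL r) (rlev r).+1); split.
  + by rewrite /bottom_vertices r0_R r0_lev !inE eqxx orbT.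
  + by rewrite /top_vertices mem_head.
  + exact: sees_end_rightmost hs_ul tab_m r_rect r_m.
Qed.
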